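(* Let $t$ be transcendental over $\mathbb{Q}$, let $R=\mathbb{Z}[t^2,t^3]$, and let $S$ be the integral closure of $R$ in its field of fractions $\mathbb{Q}(t)$. Then $S=\mathbb{Z}[t]\neq R$, and every monic polynomial in $R[x]$ of degree at least $2$ that is decomposable over $S$ is decomposable over $R$.
   Context: For a ring $A$ and $f\in A[x]$ with $\deg f\ge 2$, $f$ is called decomposable over $A$ if $f(x)=g(h(x))$ for some $g,h\in A[x]$ of degree at least $2$, and indecomposable over $A$ otherwise. *)

From HB Require Import structures.
From mathcomp Require Import all_boot all_order all_algebra.
Set Implicit Arguments. Unset Strict Implicit. Unset Printing Implicit Defensive.
Import Order.TTheory GRing.Theory Num.Theory.
Local Open Scope ring_scope.

Definition transcendental_over_Q (L : fieldType) (t : L) : Prop :=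
  forall p : {poly rat}, root (map_poly (fun q : rat => ratr q) p) t -> p = 0.

Definition Zt (L : fieldType) (t : L) : L -> Prop :=
  fun z => exists p : {poly int}, z = (map_poly (fun n : int => n%:~R) p).[t].

(* Z[t^2, t^3] = { q(t) : q in Z[x], coefficient of x^1 in q is 0 } *)
Definition Zt2t3 (L : fieldType) (t : L) : L -> Prop :=
  fun z => exists p : {poly int},
    p`_1 = 0 /\ z = (map_poly (fun n : int => n%:~R) p).[t].

Definition frac_field (L : fieldType) (A : L -> Prop) : L -> Prop :=
  fun z => exists a b, A a /\ A b /\ b != 0 /\ z = a / b.

Definition coefs_in (L : fieldType) (A : L -> Prop) (p : {poly L}) : Prop :=
  forall i, A p`_i.

Definition integral_over (L : fieldType) (A : L -> Prop) (z : L) : Prop :=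
  exists p : {poly L}, p \is monic /\ coefs_in A p /\ root p z.

Definition integral_closure (L : fieldType) (A : L -> Prop) : L -> Prop :=
  fun z => frac_field A z /\ integral_over A z.

(* f = g(h(x)) with g, h in A[x] of degree >= 2 (deg f >= 2) *)
Definition decomposable_over (L : fieldType) (A : L -> Prop) (f : {poly L}) : Prop :=
  (2 < size f)%N /\
  exists g h : {poly L}, coefs_in A g /\ coefs_in A h /\
    (2 < size g)%N /\ (2 < size h)%N /\ f = g \Po h.

From HB Require Import structures.
From mathcomp Require Import all_boot all_order all_algebra.
From mathcomp Require Import ring zify.
From Stdlib Require Import ClassicalEpsilon.
Import Order.TTheory GRing.Theory Num.Theory.
Local Open Scope ring_scope.
Set Implicit Arguments. Unset Strict Implicit. Unset Printing Implicit Defensive.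

(* Evaluation at t identifies Z[x] with Z[t], and R with the integer
   polynomials without linear term.
   - S = Z[t]: Z[t] lies in the fraction field of R and is integral over it
     (t^2 is in R); conversely Z[x] is integrally closed.  The latter is proved
     with the homogenised evaluation [hom_eval] (B^n P(A/B)), first over Q[x]
     by a gcd argument, then over Z[x] by Gauss' content lemma.
   - Descent: for P over Z[t], [coefs0 P] and [coefs1 P] collect the constant
     and the linear t-coefficients of the coefficients of P, so that P has
     coefficients in R iff coefs1 P = 0.  As for dual numbers, they satisfy a
     chain rule (G(H))_1 = G_1(H_0) + G_0'(H_0) H_1.  After renormalising a
     decomposition F = G(H) of a monic F so that H is monic with H(0) = 0, a
     degree count modulo deg H shows that F_1 = 0 forces G_1 = H_1 = 0.
   The general facts come first; the section on evaluation at t transfers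
   them to the field L, and mainTheorem3 assembles the three claims. *)

Section HomogeneousEvaluation.
Variable R : comNzRingType.
Implicit Types (P : {poly R}) (A B C : R).

(* [hom_eval n P A B] is B^n P(A/B), the degree-n homogenisation of P
   evaluated at (A, B); it lets us speak of roots that are fractions A/B
   without leaving the ring R. *)
Definition hom_eval n P A B : R := \sum_(i < n.+1) P`_i * A ^+ i * B ^+ (n - i).

Lemma hom_evalM n P A B C :
  hom_eval n P (A * C) (B * C) = C ^+ n * hom_eval n P A B.
Proof.
rewrite /hom_eval big_distrr; apply: eq_bigr => i _ /=.
have le_in : (i <= n)%N by rewrite -ltnS.
have -> : C ^+ n = C ^+ i * C ^+ (n - i) by rewrite -exprD subnKC.
rewrite !exprMn; ring.
Qed.

Lemma hom_eval_horner n P A : (size P <= n.+1)%N -> hom_eval n P A 1 = P.[A].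
Proof.
move=> sP; rewrite (horner_coef_wide A sP).
by apply: eq_bigr => i _; rewrite expr1n mulr1.
Qed.

Lemma hom_eval_monic n P A B :
  P`_n = 1 -> exists C, hom_eval n P A B = A ^+ n + B * C.
Proof.
move=> Pn; exists (\sum_(i < n) P`_i * A ^+ i * B ^+ (n.-1 - i)).
rewrite /hom_eval big_ord_recr /= Pn subnn mul1r mulr1 addrC big_distrr.
congr (_ + _); apply: eq_bigr => i _ /=.
have -> : (n - i = (n.-1 - i).+1)%N by have := ltn_ord i; lia.
rewrite exprS; ring.
Qed.

End HomogeneousEvaluation.

Lemma hom_eval_map (R R' : comNzRingType) (f : {rmorphism R -> R'}) n
    (P : {poly R}) (A B : R) :
  f (hom_eval n P A B) = hom_eval n (map_poly f P) (f A) (f B).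
Proof.
rewrite rmorph_sum; apply: eq_bigr => i _.
by rewrite !rmorphM !rmorphXn coef_map.
Qed.

Lemma poly_field_integrally_closed (F : fieldType) (P : {poly {poly F}}) n
    (A B : {poly F}) :
  B != 0 -> P`_n = 1 -> hom_eval n P A B = 0 -> B %| A.
Proof.
move=> Bnz Pn hP.
set g := gcdp A B; set A1 := A %/ g; set B1 := B %/ g.
have gnz : g != 0 by rewrite gcdp_eq0 negb_and Bnz orbT.
have eA : A = A1 * g by rewrite divpK // dvdp_gcdl.
have eB : B = B1 * g by rewrite divpK // dvdp_gcdr.
have coprime_AB1 : coprimep A1 B1 by apply: coprimep_div_gcd; rewrite Bnz orbT.
have hP1 : hom_eval n P A1 B1 = 0.
  apply/eqP; move: hP; rewrite eA eB hom_evalM => /eqP.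
  by rewrite mulf_eq0 expf_eq0 (negPf gnz) andbF.
have [C hC] := hom_eval_monic A1 B1 Pn.
have B1_dvd_pow : B1 %| 1 * A1 ^+ n.
  have -> : A1 ^+ n = B1 * - C by apply/eqP; rewrite mulrN -addr_eq0 -hC hP1.
  by rewrite mul1r dvdp_mulIl.
rewrite Gauss_dvdpl in B1_dvd_pow; last by rewrite coprimep_expr // coprimep_sym.
by rewrite eA eB dvdp_mul2r //; apply: dvdp_trans B1_dvd_pow (dvd1p _).
Qed.

Notation iQ := (map_poly (intr : int -> rat)).

Lemma iQ_inj : injective iQ.
Proof. by apply: map_inj_poly; [exact: intr_inj | rewrite rmorph0]. Qed.

Lemma zcontentsX (p : {poly int}) n : zcontents (p ^+ n) = zcontents p ^+ n.
Proof.
elim: n => [|n IHn]; first by rewrite !expr0 zcontents_monic ?monic1.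
by rewrite !exprS zcontentsM IHn.
Qed.

(* Write W = (u/v) q with q
   primitive and u, v coprime; clearing denominators gives U^n = v * C in Z[x]
   with U = u q, and comparing contents forces v = 1. *)
Lemma zpoly_integral_rat_poly (P : {poly {poly int}}) n (W : {poly rat}) :
  P`_n = 1 -> hom_eval n (map_poly iQ P) W 1 = 0 -> exists V, W = iQ V.
Proof.
move=> Pn hW.
case: (rat_poly_scale W) => q [a a0 eW].
have [q0|qnz] := eqVneq q 0; first by exists 0; rewrite eW q0 !rmorph0 scaler0.
set r : rat := (zcontents q)%:~R / a%:~R.
set u := numq r; set v := denq r; set U := u *: zprimitive q.
have eWU : W * iQ v%:P = iQ U.
  rewrite eW {1}(zpolyEprim q) /U !map_polyZ /= map_polyC /= -mul_polyC mulrC.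
  by rewrite !mul_polyC !scalerA numqE /r; congr (_ *: _); ring.
have hU : hom_eval n P U v%:P = 0.
  apply: iQ_inj; rewrite hom_eval_map /= -eWU -[X in hom_eval _ _ _ X]mul1r.
  by rewrite hom_evalM hW mulr0 rmorph0.
have [C hC] := hom_eval_monic U v%:P Pn.
have eUn : U ^+ n = v *: - C.
  by apply/eqP; rewrite -mul_polyC mulrN -addr_eq0 -hC hU.
have hcont : u ^+ n = v * zcontents (- C).
  have := congr1 zcontents eUn.
  by rewrite zcontentsZ zcontentsX zcontentsZ zcontents_primitive qnz mulr1.
have v_dvd : (`|v| %| `|u| ^ n)%N by rewrite -abszX hcont abszM dvdn_mulr.
have v1 : `|v|%N = 1%N.
  have : coprime `|v| (`|u| ^ n) by rewrite coprimeXr // coprime_sym coprime_num_den.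
  by rewrite /coprime (gcdn_idPl v_dvd) => /eqP.
have v_eq1 : v = 1 by rewrite -[v]gtr0_norm ?denq_gt0 // -abszE v1.
by exists U; rewrite -eWU v_eq1 map_polyC /= mulr1.
Qed.

(* Over Q[x] the quotient W = A/B exists by
   [poly_field_integrally_closed], and W lies in Z[x] by Gauss' lemma. *)
Lemma zpoly_integrally_closed (P : {poly {poly int}}) n (A B : {poly int}) :
  B != 0 -> P`_n = 1 -> hom_eval n P A B = 0 -> exists V, A = B * V.
Proof.
move=> Bnz Pn hP.
have BQnz : iQ B != 0 by rewrite -(rmorph0 iQ) (inj_eq iQ_inj).
have hPQ : hom_eval n (map_poly iQ P) (iQ A) (iQ B) = 0.
  by rewrite -hom_eval_map /= hP rmorph0.
have PQn : (map_poly iQ P)`_n = 1 by rewrite coef_map /= Pn rmorph1.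
have BQ_dvd : iQ B %| iQ A := poly_field_integrally_closed BQnz PQn hPQ.
set W := iQ A %/ iQ B.
have eAW : iQ A = W * iQ B by rewrite divpK.
have hW : hom_eval n (map_poly iQ P) W 1 = 0.
  apply/eqP; move: hPQ; rewrite eAW -[X in hom_eval _ _ _ X]mul1r hom_evalM.
  by move/eqP; rewrite mulf_eq0 expf_eq0 (negPf BQnz) andbF.
have [V eWV] := zpoly_integral_rat_poly Pn hW.
by exists V; apply: iQ_inj; rewrite rmorphM /= eAW eWV mulrC.
Qed.

Section FirstOrderPart.
Variable R : comNzRingType.
Implicit Types (P Q : {poly {poly R}}) (a b : {poly R}).

(* For a polynomial P over R[t], [coefs0 P] and [coefs1 P] collect the
   constant and the linear t-coefficients of the coefficients of P; together
   they describe the image of P over R[t]/(t^2). *)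
Definition coefs0 P : {poly R} := map_poly (horner_eval 0) P.
Definition coefs1 P : {poly R} := map_poly (coefp 1) P.
HB.instance Definition _ :=
  GRing.RMorphism.copy coefs0 (map_poly (horner_eval (0 : R))).
HB.instance Definition _ :=
  GRing.Additive.copy coefs1 (map_poly (coefp 1 : {poly R} -> R)).

Lemma coef_coefs0 P i : (coefs0 P)`_i = P`_i`_0.
Proof. by rewrite coef_map /= horner_evalE horner_coef0. Qed.

Lemma coef_coefs1 P i : (coefs1 P)`_i = P`_i`_1.
Proof. by rewrite coef_map. Qed.

Lemma coef1M a b : (a * b)`_1 = a`_0 * b`_1 + a`_1 * b`_0.
Proof. by rewrite coefM big_ord_recr big_ord_recr big_ord0 /= add0r. Qed.

Lemma coefs1M P Q : coefs1 (P * Q) = coefs1 P * coefs0 Q + coefs0 P * coefs1 Q.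
Proof.
apply/polyP => i; rewrite coefD !coefM coef_coefs1 coefM -big_split /= coef_sum.
by apply: eq_bigr => j _; rewrite coef1M !coef_coefs0 !coef_coefs1 addrC.
Qed.

Lemma coefs1_comp P Q :
  coefs1 (P \Po Q) =
  coefs1 P \Po coefs0 Q + ((coefs0 P)^`() \Po coefs0 Q) * coefs1 Q.
Proof.
have coefs0X : coefs0 'X = 'X by exact: map_polyX.
have coefs1X : coefs1 'X = 0.
  apply/polyP => i; rewrite coef_coefs1 coefX coef0.
  by case: (i == 1%N); rewrite ?coef1 ?coef0.
have coefs0C c : coefs0 c%:P = (c`_0)%:P.
  by rewrite /coefs0 map_polyC /= horner_evalE horner_coef0.
have coefs1C c : coefs1 c%:P = (c`_1)%:P by rewrite /coefs1 map_polyC.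
elim/poly_ind: P => [|P c IHP]; first by rewrite comp_poly0 !raddf0 /= mul0r addr0.
rewrite comp_polyD comp_polyM comp_polyX comp_polyC raddfD /= coefs1M IHP coefs1C.
rewrite [coefs0 (P \Po Q)]map_comp_poly raddfD /= coefs1M coefs1X coefs1C.
rewrite [coefs0 (_ + _)]rmorphD /= [coefs0 (_ * _)]rmorphM /= coefs0X coefs0C.
rewrite derivMXaddC mulr0 addr0 !(comp_polyD, comp_polyM, comp_polyX, comp_polyC); ring.
Qed.

Lemma coefs0_monic P :
  P \is monic -> coefs0 P \is monic /\ size (coefs0 P) = size P.
Proof.
move=> mP; split; first exact: monic_map.
by apply: size_map_poly_id0; rewrite (monicP mP) /= horner_evalE hornerC oner_neq0.
Qed.

End FirstOrderPart.

Lemma size_deriv_monic (R : numDomainType) (g : {poly R}) :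
  g \is monic -> size g^`() = (size g).-1.
Proof.
move=> mg; apply/eqP; rewrite eqn_leq; apply/andP; split.
  by have := lt_size_deriv (monic_neq0 mg); case: (size g).
case sg : (size g) => [|[|n]] //=.
rewrite ltnNge; apply/negP => /leq_sizeP /(_ n (leqnn n)) /eqP.
have gn : g`_n.+1 = 1 by move/monicP: mg; rewrite /lead_coef sg.
by rewrite coef_deriv gn pnatr_eq0.
Qed.

Lemma size_comp_poly_nz (R : idomainType) (p q : {poly R}) :
  p \Po q != 0 -> size (p \Po q) = ((size p).-1 * (size q).-1).+1.
Proof.
by move=> nz; rewrite -size_comp_poly prednK // lt0n size_poly_eq0.
Qed.

Lemma mul_neq_mulDr (m d e r : nat) : (0 < r < e)%N -> m * e <> d * e + r.
Proof.
move=> /andP [r_gt0 r_lt_e] /(congr1 (modn^~ e)).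
by rewrite modnMl modnMDl modn_small // => r0; rewrite -r0 in r_gt0.
Qed.

(* By the chain rule the t-linear part
   of G(H) is G1(H0) + G0'(H0) * H1; if H1 were nonzero, its degree would lie
   strictly between 0 and deg H (as H(0) = 0 and H is monic), so the degree of
   the second summand is not a multiple of deg H while that of the first is. *)
Lemma coefs1_comp_eq0 (R : numDomainType) (G H : {poly {poly R}}) :
  G \Po H \is monic -> H \is monic -> H`_0 = 0 -> (1 < size G)%N ->
  (2 < size H)%N -> coefs1 (G \Po H) = 0 -> coefs1 G = 0 /\ coefs1 H = 0.
Proof.
move=> mGH mH H0 sG sH; rewrite coefs1_comp.
have mG : G \is monic.
  apply/monicP; move/monicP: mGH; rewrite lead_coef_comp ?(ltnW sH) //.
  by rewrite (monicP mH) expr1n mulr1.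
have [mg0 sg0] := coefs0_monic mG; have [_ sh0] := coefs0_monic mH.
set g0 := coefs0 G; set h0 := coefs0 H; set g1 := coefs1 G; set k := coefs1 H.
have sh0_gt1 : (1 < size h0)%N by rewrite sh0 ltnW.
have k0 : k`_0 = 0 by rewrite coef_coefs1 H0 coef0.
have sk : (size k <= (size H).-1)%N.
  apply/leq_sizeP => j; rewrite leq_eqVlt => /orP [/eqP <-|ltj].
    by rewrite coef_coefs1 -/(lead_coef H) (monicP mH) coef1.
  by rewrite coef_coefs1 [H`_j]nth_default ?coef0 //; move: ltj; case: (size H).
have dg0 : g0^`() \Po h0 != 0.
  rewrite comp_poly_eq0 // -size_poly_eq0 size_deriv_monic // sg0.
  by case: (size G) sG => [|[]].
have [->|knz] := eqVneq k 0.
  by rewrite mulr0 addr0 => /eqP; rewrite comp_poly_eq0 // => /eqP.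
move=> /eqP; rewrite addr_eq0 => /eqP e.
have sk_gt1 : (1 < size k)%N.
  by rewrite ltnNge; apply: contra knz => /size1_polyC ->; rewrite k0.
have g1h0 : g1 \Po h0 != 0.
  by rewrite e oppr_eq0 mulf_neq0.
move/(congr1 (fun p : {poly R} => size p)): e.
rewrite size_polyN size_mul // !size_comp_poly_nz // size_deriv_monic // sg0 sh0 /=.
rewrite -(prednK (ltnW sk_gt1)) addnS => /eq_add_S /mul_neq_mulDr[].
by rewrite -ltnS prednK ?sk_gt1 ?(leq_trans _ sk) // ltnW.
Qed.

(* Any decomposition F = G(H) of a monic polynomial over an integral domain
   can be renormalised, by an affine change of the inner variable, so that
   H is monic with H(0) = 0: the leading coefficient u of H is a
   unit because lead(F) = lead(G) u^(deg G) = 1, and we use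
   G' = G(u x + H(0)) and H' = u^-1 (H - H(0)). *)
Lemma normalize_decomposition (R : idomainType) (F G H : {poly R}) :
  F \is monic -> F = G \Po H -> (1 < size G)%N -> (1 < size H)%N ->
  exists G' H' : {poly R}, [/\ F = G' \Po H', H' \is monic, H'`_0 = 0,
    size G' = size G & size H' = size H].
Proof.
move=> mF eF sG sH; set u := lead_coef H; set c := H`_0.
have u_unit : u \is a GRing.unit.
  apply/unitrPr; exists (lead_coef G * u ^+ (size G).-2).
  move/monicP: mF; rewrite eF lead_coef_comp // => <-.
  by rewrite mulrCA -exprS prednK // -ltnS prednK // ltnW.
have unz : u != 0 by apply: contraTneq u_unit => ->; rewrite unitr0.
set H' := u^-1 *: (H - c%:P); set G' := G \Po (u *: 'X + c%:P).
have sHc : size (H - c%:P) = size H.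
  by rewrite size_addl // size_polyN (leq_ltn_trans (size_polyC_leq1 c)).
have sH' : size H' = size H by rewrite size_scale ?invr_eq0.
have mH' : H' \is monic.
  by apply/monicP; rewrite lead_coefZ lead_coefDl ?size_polyN ?sHc ?mulVr //
    (leq_ltn_trans (size_polyC_leq1 c)).
have eF' : F = G' \Po H'.
  rewrite eF -comp_polyA comp_polyD comp_polyZ comp_polyX comp_polyC.
  by rewrite /H' scalerA divrr // scale1r subrK.
exists G', H'; split=> //.
- by rewrite coefZ coefB coefC /= subrr mulr0.
- rewrite size_comp_poly2 // size_addl ?size_scale ?size_polyX //.
  exact: leq_ltn_trans (size_polyC_leq1 c) _.
Qed.

Lemma lift_coefs (A B : nzRingType) (f : A -> B) (Q : A -> Prop) (p : {poly B}) :
  f 0 = 0 -> Q 0 -> (forall i, exists a, Q a /\ p`_i = f a) ->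
  exists P : {poly A}, map_poly f P = p /\ forall i, Q P`_i.
Proof.
move=> f0 Q0 hp.
have pre i : {a | Q a /\ p`_i = f a} by apply: constructive_indefinite_description.
exists (\poly_(i < size p) sval (pre i)); split=> [|i].
  apply/polyP => i; rewrite coef_map_id0 // coef_poly.
  by case: ltnP => [_|le_p]; [case: (svalP (pre i)) | rewrite f0 nth_default].
by rewrite coef_poly; case: ltnP => _ //; case: (svalP (pre i)).
Qed.

Section EvaluationAtT.
Variables (L : fieldType) (t : L).
Hypothesis htr : transcendental_over_Q t.

(* Evaluation at t, an isomorphism from Z[x] onto Z[t] since t is
   transcendental; Zt t and Zt2t3 t are by definition its images of Z[x] and
   of the polynomials without linear term. *)
Definition evt (P : {poly int}) : L := (map_poly intr P).[t].
HB.instance Definition _ :=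
  GRing.RMorphism.copy evt (horner_eval t \o map_poly (intr : int -> L)).

Lemma evt_injective : injective evt.
Proof.
apply: raddf_inj => P evtP0; apply: iQ_inj; rewrite rmorph0; apply: htr.
rewrite /root -map_poly_comp_id0; last by rewrite (ratr_int _ 0).
by rewrite (eq_map_poly (ratr_int _)) -[_.[t]]/(evt P) evtP0.
Qed.

Lemma evtX : evt 'X = t.
Proof. by rewrite /evt map_polyX hornerX. Qed.

Lemma map_evt_inj : injective (map_poly evt).
Proof. by apply: map_inj_poly; [exact: evt_injective | rewrite rmorph0]. Qed.

Lemma size_map_evt (P : {poly {poly int}}) : size (map_poly evt P) = size P.
Proof. by apply: size_map_inj_poly; [exact: evt_injective | rewrite rmorph0]. Qed.

Lemma map_evt_monic (P : {poly {poly int}}) :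
  (map_poly evt P \is monic) = (P \is monic).
Proof.
rewrite !monicE lead_coef_map_inj ?rmorph0 //; last exact: evt_injective.
by rewrite -(rmorph1 evt) (inj_eq evt_injective).
Qed.

(* Every element of the integral closure of Z[t^2, t^3] lies in Z[t]: write
   z = a/b with a = A(t), b = B(t); a monic equation for z over Z[t^2, t^3]
   lifts to one over Z[x] for A/B, so B divides A by integral closedness of
   Z[x]. *)
Lemma integral_closure_sub_Zt z : integral_closure (Zt2t3 t) z -> Zt t z.
Proof.
move=> [[a [b [[A [_ ea]] [[B [_ eb]] [bnz ez]]]]] [p [mp [Rp pz]]]].
have [P [eP _]] := lift_coefs (rmorph0 evt) (coef0 _ 1) Rp.
set n := (size P).-1.
have Pn : P`_n = 1 by apply/monicP; rewrite -map_evt_monic eP.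
have Bnz : B != 0 by apply: contraNneq bnz => B0; rewrite eb B0 -/(evt 0) rmorph0.
have hP : hom_eval n P A B = 0.
  apply: evt_injective; rewrite rmorph0 hom_eval_map /= eP -[evt A]ea -[evt B]eb.
  have -> : a = z * b by rewrite ez divfK.
  rewrite -[X in hom_eval _ _ _ X]mul1r hom_evalM hom_eval_horner.
    by rewrite (rootP pz) mulr0.
  by rewrite -eP size_map_evt /n; case: (size P).
have [V eAV] := zpoly_integrally_closed Bnz Pn hP.
by exists V; rewrite ez ea -/(evt A) eAV rmorphM /= -[evt B]eb mulrAC divff ?mul1r.
Qed.

Lemma t_neq0 : t != 0.
Proof. by rewrite -evtX -(rmorph0 evt) (inj_eq evt_injective) polyX_eq0. Qed.

(* Conversely Z[t] lies in the integral closure: P(t) = P(t) t^2 / t^2 is a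
   fraction over Z[t^2, t^3], and writing P = Q + c x with Q free of a linear
   term, P(t) is a root of (x - Q(t))^2 - c^2 t^2, which has coefficients
   in Z[t^2, t^3]. *)
Lemma Zt_sub_integral_closure z : Zt t z -> integral_closure (Zt2t3 t) z.
Proof.
move=> [P ez]; change (z = evt P) in ez.
split.
  exists (evt ('X^2 * P)), (evt 'X^2).
  split; first by exists ('X^2 * P); rewrite coefXnM.
  split; first by exists 'X^2; rewrite coefXn.
  have t2nz : evt 'X^2 != 0 by rewrite rmorphXn /= evtX expf_neq0 // t_neq0.
  by split => //; rewrite rmorphM /= -ez mulrAC divff // mul1r.
set c := P`_1; set Q := P - c *: 'X.
have Q1 : Q`_1 = 0 by rewrite coefB coefZ coefX /= mulr1 subrr.
have ePQ : P = Q + c *: 'X by rewrite subrK.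
set M : {poly {poly int}} := ('X - (Q + c *: 'X)%:P) * ('X - (Q - c *: 'X)%:P).
have eM : M = 'X^2 + (- (Q *+ 2))%:P * 'X + (Q ^+ 2 - (c *: 'X) ^+ 2)%:P.
  rewrite /M !rmorphB !rmorphD !rmorphXn rmorphN /= polyCN polyCMn !rmorphB /=; ring.
exists (map_poly evt M); split; first by apply: monic_map; rewrite monicMl monicXsubC.
split.
  move=> i; rewrite coef_map /=; exists M`_i; split => //.
  rewrite eM !coefD coefXn coefMX !coefC.
  case: i => [|[|[|i]]] /=.
  - rewrite !coef0 !add0r coefB !expr2 !coef1M Q1 !coefZ !coefX /=.
    by rewrite !mulr0 !mul0r ?subr0 ?addr0.
  - by rewrite !coef0 add0r addr0 coefN coefMn Q1 mul0rn oppr0.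
  - by rewrite !coef0 !addr0 coef1.
  - by rewrite !coef0 !addr0.
apply/rootP; rewrite /M rmorphM /= hornerM !rmorphB /= !map_polyX !map_polyC /=.
by rewrite !hornerXsubC -ePQ -ez subrr mul0r.
Qed.

Lemma t_notin_Zt2t3 : ~ Zt2t3 t t.
Proof.
move=> [P [P1 etP]].
have ePX : P = 'X by apply: evt_injective; rewrite evtX.
by move: P1; rewrite ePX coefX.
Qed.

(* Since the integral closure is Z[t], a
   decomposition f = g(h) over it lifts to F = G(H) over Z[x]; after
   normalising (H monic with H(0) = 0), the linear t-parts of G and H vanish
   because that of F does, i.e. G and H have coefficients in Z[t^2, t^3]. *)
Lemma decomposition_descends f :
  f \is monic -> coefs_in (Zt2t3 t) f ->
  decomposable_over (integral_closure (Zt2t3 t)) f -> decomposable_over (Zt2t3 t) f.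
Proof.
move=> mf Rf [sf [g [h [Sg [Sh [sg [sh efgh]]]]]]].
have lift_S p : coefs_in (integral_closure (Zt2t3 t)) p ->
    exists P, map_poly evt P = p.
  move=> Sp; have [|P [eP _]] := @lift_coefs _ _ evt (fun _ => True) p (rmorph0 evt) I.
    by move=> i; have [P eP] := integral_closure_sub_Zt (Sp i); exists P.
  by exists P.
have [G eG] := lift_S g Sg; have [H eH] := lift_S h Sh.
have [F [eF F1]] := lift_coefs (rmorph0 evt) (coef0 _ 1) Rf.
have eFGH : F = G \Po H by apply: map_evt_inj; rewrite map_comp_poly eF eG eH.
have mF : F \is monic by rewrite -map_evt_monic eF.
have sG : (2 < size G)%N by rewrite -size_map_evt eG.
have sH : (2 < size H)%N by rewrite -size_map_evt eH.
have [G' [H' [eF' mH' H'0 sG' sH']]] :=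
  normalize_decomposition mF eFGH (ltnW sG) (ltnW sH).
have coefs1F : coefs1 (G' \Po H') = 0.
  by apply/polyP => i; rewrite -eF' coef_coefs1 F1 coef0.
have [G'1 H'1] : coefs1 G' = 0 /\ coefs1 H' = 0.
  by apply: coefs1_comp_eq0 mH' H'0 _ _ coefs1F; rewrite ?sG' ?sH' -?eF' // ltnW.
have coefs_R (P : {poly {poly int}}) :
    coefs1 P = 0 -> coefs_in (Zt2t3 t) (map_poly evt P).
  move=> P1 i; rewrite coef_map; exists P`_i; split=> //.
  by rewrite -coef_coefs1 P1 coef0.
split=> //; exists (map_poly evt G'), (map_poly evt H').
rewrite !size_map_evt sG' sH' -eF eF' map_comp_poly.
by split; [exact: coefs_R G'1 | split; [exact: coefs_R H'1 | ]].
Qed.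
End EvaluationAtT.

Theorem mainTheorem3 (L : fieldType) (t : L)
  (hchar : [pchar L] =i pred0) (htr : transcendental_over_Q t) :
  let R := Zt2t3 t in
  let S := integral_closure R in
  (forall z, S z <-> Zt t z) /\
  ~ (forall z, Zt t z <-> R z) /\
  (forall f : {poly L}, f \is monic -> coefs_in R f -> (2 < size f)%N ->
     decomposable_over S f -> decomposable_over R f).
Proof.
move=> R S; split; [|split].
- move=> z; split; first exact: integral_closure_sub_Zt.
  exact: Zt_sub_integral_closure.
- move=> eq_Zt_R; apply: (t_notin_Zt2t3 htr); apply/eq_Zt_R.
  by exists 'X; rewrite -[LHS](evtX t).
- by move=> f mf Rf _; exact: decomposition_descends.
Qed.
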